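(* Let $P$ be a recursively labelled forest poset on $\{1,2,\ldots,n\}$, and for each $i$ let $h_i:=|P_{\geq i}|$ and $\min(P_{\geq i})$ be the smallest integer in $P_{\geq i}$. Then, in $\mathbb{Q}(x_1,x_2,\ldots)$, $$L(P):=\sum_{w \in \mathcal{L}(P)} \mathrm{wt}(w) = \frac{[n]!}{\prod_{i=1}^n F^{\min(P_{\geq i})-1}[h_i]}.$$
   Context: Work in the field $\mathbb{Q}(x_1,x_2,\ldots)$ of rational functions in countably many indeterminates, and let $F$ be the field endomorphism (''Frobenius map'') with $F(x_i)=x_{i+1}$ for all $i$. Define $[n]:=x_1+x_2+\cdots+x_n$ (so $F^{j}[n]=x_{j+1}+\cdots+x_{j+n}$), $[0]!:=1$ and $[n]!:=[n]\cdot F([n-1]!)=\prod_{j=0}^{n-1}F^j[n-j]$. For a $k$-element set $S=\{i_1>i_2>\cdots>i_k\}$ of positive integers define $\mathrm{wt}(S):=\frac{\prod_{j=1}^k F^{i_j-1}[j]}{[k]!}$ (with $\mathrm{wt}(\emptyset)=1$). For a permutation $w=(w_1,\ldots,w_n)$ of $\{1,\ldots,n\}$ in one-line notation define $\mathrm{wt}(w)$ recursively: the empty permutation ($n=0$) has weight $1$; otherwise let $k:=w_1-1$, let $S(w):=\{i: w_i\le k\}$, let $a$ be the permutation of $\{1,\ldots,k\}$ obtained by listing the values $w_i\le k$ in order of increasing $i$, and let $\hat b$ be the permutation of $\{1,\ldots,n-k-1\}$ obtained by listing the values $w_i-k-1$ for those $i$ with $w_i>k+1$, in order of increasing $i$;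 then $\mathrm{wt}(w):=\mathrm{wt}(S(w))\cdot \mathrm{wt}(a)\cdot F^{k+1}(\mathrm{wt}(\hat b))$. A forest poset on $\{1,\ldots,n\}$ is a partial order $<_P$ in which every element covers at most one other element; $P_{\geq i}:=\{j: j\geq_P i\}$ is the subtree rooted at $i$. $P$ is recursively labelled if each $P_{\geq i}$ is an interval of consecutive integers. $\mathcal{L}(P)$ is the set of linear extensions of $P$: permutations $w$ such that $i<_P j$ implies $i$ appears before $j$ in the word $w_1w_2\cdots w_n$. *)

From mathcomp Require Import all_boot all_order all_algebra.
From mathcomp Require Import mpoly.
Set Implicit Arguments. Unset Strict Implicit. Unset Printing Implicit Defensive.
Import GRing.Theory.
Local Open Scope ring_scope.

(* The field Q(x_1,x_2,...) is modelled by any field K containing a family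
   x : nat -> K of elements that are algebraically independent over the prime
   ring (which forces characteristic 0), together with a ring endomorphism F
   of K with F (x i) = x (i+1).  Only x_1, x_2, ... (i >= 1) are used. *)

Definition alg_indep (K : fieldType) (x : nat -> K) : Prop :=
  forall (m : nat) (p : {mpoly int[m]}),
    p != 0 -> mmap intr (fun i : 'I_m => x i) p != 0.

Section Weights.
Variables (K : fieldType) (x : nat -> K) (F : K -> K).

Definition brk (n : nat) : K := \sum_(1 <= i < n.+1) x i.

Definition brkfact (n : nat) : K := \prod_(j < n) iter j F (brk (n - j)).

(* wt(S) for a finite set S of positive integers, given as a (duplicate-free)
   list; it is sorted decreasingly i_1 > i_2 > ... > i_k. *)
Definition wt_set (S : seq nat) : K :=
  let s := sort geq S in
  (\prod_(j < size s) iter (nth 0%N s j).-1 F (brk j.+1)) / brkfact (size s).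

(* one step of the recursive weight of a permutation w (one-line notation,
   values in 1..n), with fuel *)
Fixpoint wt_perm_fuel (fuel : nat) (w : seq nat) : K :=
  match fuel with
  | 0 => 1
  | fuel'.+1 =>
    match w with
    | [::] => 1
    | w1 :: _ =>
      let k := w1.-1 in
      let S := [seq i.+1 | i <- iota 0 (size w) & (nth 0%N w i <= k)%N] in
      let a := [seq v <- w | (v <= k)%N] in
      let bh := [seq (v - k.+1)%N | v <- w & (k.+1 < v)%N] in
      wt_set S * wt_perm_fuel fuel' a * iter k.+1 F (wt_perm_fuel fuel' bh)
    end
  end.

(* fuel size w suffices, since a and bh are strictly shorter than w *)
Definition wt_perm (w : seq nat) : K := wt_perm_fuel (size w) w.

End Weights.

(* Posets on {1,...,n}, given by a relation le on nat (only its restriction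
   to {1,...,n} matters). *)
Section Posets.
Variables (n : nat) (le : rel nat).

Definition inrange (i : nat) : bool := (1 <= i <= n)%N.

Definition is_poset : Prop :=
  [/\ forall i, inrange i -> le i i,
      forall i j, inrange i -> inrange j -> le i j -> le j i -> i = j &
      forall i j k, inrange i -> inrange j -> inrange k ->
                    le i j -> le j k -> le i k].

Definition ltP (i j : nat) : bool := le i j && (i != j).

Definition covers (j i : nat) : Prop :=
  inrange i /\ inrange j /\ ltP i j /\
  ~ (exists k, inrange k /\ ltP i k /\ ltP k j).

Definition is_forest : Prop :=
  is_poset /\
  forall j i i', inrange j -> covers j i -> covers j i' -> i = i'.

Definition upset (i : nat) : seq nat := [seq j <- iota 1 n | le i j].

Definition rec_labelled : Prop :=
  forall i, inrange i ->
    exists a b : nat, forall j, inrange j -> (le i j <-> (a <= j <= b)%N).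

Definition hgt (i : nat) : nat := size (upset i).
Definition minup (i : nat) : nat := \big[minn/n]_(j <- upset i) j.

Definition linext (w : seq nat) : bool :=
  perm_eq w (iota 1 n) &&
  [forall i : 'I_n.+1, forall j : 'I_n.+1,
     (inrange i && inrange j && ltP i j) ==> (index (i : nat) w < index (j : nat) w)%N].

End Posets.

(* Read a linear extension w of P from its first letter r.  Then r is a root,
   and since P is recursively labelled each subtree lies entirely below or
   entirely above r; so P splits into a forest on {1,...,r-1} and one on
   {r+1,...,n}, and w is an interleaving of linear extensions a and b of the two
   parts, the set S of positions of a being arbitrary.  The recursive weight is
   made for this decomposition: wt(w) = wt(S) wt(a) F^r(wt(b)).  Summing wt(S)
   over all position sets gives F([n-1] F[n-2] ... F^(r-2)[n-r+1]) / [r-1]!, so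
   by induction the root r contributes F([n-1]!) F^(r-1)[h_r] / (hook product).
   The trees of the roots partition {1,...,n}, so their hooks F^(r-1)[h_r] add up
   to [n], and [n] F([n-1]!) = [n]!.  Algebraic independence of the x_i is only
   needed to see that the brackets, hence all denominators, are nonzero. *)

From Pilot Require Import Defs.
From mathcomp Require Import all_boot all_order all_algebra.
From mathcomp Require Import mpoly zify ring.
Set Implicit Arguments. Unset Strict Implicit. Unset Printing Implicit Defensive.
Import GRing.Theory.

Lemma count_lt_in (T : eqType) (s : seq T) (p q : pred T) :
  {in s, subpred p q} -> has (predI q (predC p)) s -> (count p s < count q s)%N.
Proof.
move=> pq; rewrite has_count => hq.
have Ep : count p s = count (predI p q) s.
  by apply: eq_in_count => y ys /=; case py: (p y); rewrite ?(pq y ys py).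
rewrite -(size_filter q) -(count_predC p (filter q s)) !count_filter -Ep.
rewrite -{1}(addn0 (count p s)) ltn_add2l.
apply: leq_trans hq _; apply: eq_leq; apply: eq_count => y /=; exact: andbC.
Qed.

Lemma rem_catl (T : eqType) (y : T) (A B : seq T) :
  y \in A -> rem y (A ++ B) = rem y A ++ B.
Proof. by elim: A => //= a A IH; rewrite inE eq_sym; case: eqP => //= _ /IH ->. Qed.

Lemma rem_catr (T : eqType) (y : T) (A B : seq T) :
  y \notin A -> rem y (A ++ B) = A ++ rem y B.
Proof. by elim: A => //= a A IH; rewrite inE negb_or eq_sym => /andP[/negbTE -> /IH ->]. Qed.

Lemma iota_split_at n r : (0 < r <= n)%N ->
  iota 1 n = iota 1 r.-1 ++ r :: iota r.+1 (n - r).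
Proof.
move=> rn; have En : n = (r.-1 + (n - r).+1)%N by lia.
by rewrite {1}En iotaD /= (_ : (1 + r.-1)%N = r) //; lia.
Qed.

Lemma iota_shift r k : iota r.+1 k = map (addn r) (iota 1 k).
Proof. by rewrite -iotaDl addn1. Qed.

Lemma filter_iota_interval lo hi s k :
  [seq j <- iota s k | (lo <= j <= hi)%N] =
  iota (maxn lo s) (minn hi.+1 (s + k) - maxn lo s).
Proof.
elim: k s => [|k IH] s; first by rewrite /= (_ : _ - _ = 0)%N //; lia.
rewrite /= IH; case: ifP => h.
  rewrite (_ : minn hi.+1 (s + k.+1) - maxn lo s
             = (minn hi.+1 (s.+1 + k) - maxn lo s.+1).+1)%N; last by lia.
  by rewrite (_ : maxn lo s = s) /=; [congr (_ :: iota _ _); lia | lia].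
have [lt|ge] := ltnP s lo; first by congr iota; lia.
have -> : (minn hi.+1 (s + k.+1) - s = 0)%N by lia.
by have -> : (minn hi.+1 (s.+1 + k) - maxn lo s.+1 = 0)%N by lia.
Qed.

Lemma bigmin_iota a h c : (0 < h)%N -> (a <= c)%N -> \big[minn/c]_(j <- iota a h) j = a.
Proof.
case: h => // h _ ac; rewrite big_cons; apply/minn_idPl.
rewrite big_seq; elim/big_ind: _ => // [y z ay az|j]; first by rewrite leq_min ay.
by rewrite mem_iota; lia.
Qed.

Fixpoint shuffles (L k : nat) : seq bitseq :=
  match L with
  | 0 => if k is 0 then [:: [::]] else [::]
  | L'.+1 => (if k is k'.+1 then map (cons true) (shuffles L' k') else [::])
             ++ map (cons false) (shuffles L' k)
  end.

Lemma shuffles_gt L k : (L < k)%N -> shuffles L k = [::].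
Proof. by elim: L k => [|L IH] [|k] //= lt; rewrite !IH //; lia. Qed.

Lemma mem_shuffles L k m : m \in shuffles L k -> size m = L /\ count id m = k.
Proof.
elim: L k m => [|L IH] k m /=; first by case: k => //; rewrite inE => /eqP ->.
rewrite mem_cat => /orP[|] /=.
  by case: k => // k /mapP[m' /IH [? ?] ->] /=; split; lia.
by move=> /mapP[m' /IH [? ?] ->] /=; split; lia.
Qed.

Section Interleave.
Variable T : Type.
Implicit Types (m : bitseq) (a b : seq T).

Fixpoint interleave m a b : seq T :=
  match m with
  | [::] => [::]
  | true :: m' => if a is u :: a' then u :: interleave m' a' b else [::]
  | false :: m' => if b is v :: b' then v :: interleave m' a b' else [::]
  end.

Definition fits m a b := (size m == size a + size b) && (count id m == size a).

Lemma fits_ind (P : bitseq -> seq T -> seq T -> Prop) :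
  P [::] [::] [::] ->
  (forall m a b u, fits m a b -> P m a b -> P (true :: m) (u :: a) b) ->
  (forall m a b v, fits m a b -> P m a b -> P (false :: m) a (v :: b)) ->
  forall m a b, fits m a b -> P m a b.
Proof.
move=> H0 H1 H2; elim=> [|c m IH] a b /andP[/eqP S /eqP C] /=.
  by case: a S C => //; case: b.
case: c S C => /= S C.
  case: a S C => //= u a S C; have fm : fits m a b by apply/andP; split; apply/eqP; lia.
  exact/H1/IH.
case: b S => [|v b] /= S; first by have := count_size id m; lia.
have fm : fits m a b by apply/andP; split; apply/eqP; lia.
exact/H2/IH.
Qed.

Lemma size_interleave m a b : fits m a b -> size (interleave m a b) = size m.
Proof. by move: m a b; apply: fits_ind => //= m a b u _ ->. Qed.

Lemma count_interleave m a b (q : pred T) : fits m a b ->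
  count q (interleave m a b) = (count q a + count q b)%N.
Proof. by move: m a b; apply: fits_ind => //= m a b u _ ->; lia. Qed.

Lemma interleave_split m a b (p : pred T) : fits m a b ->
  all p a -> all (predC p) b ->
  [/\ filter p (interleave m a b) = a, filter (predC p) (interleave m a b) = b &
      map p (interleave m a b) = m].
Proof.
move: m a b; apply: fits_ind => [|m a b u _ IH|m a b v _ IH] //=.
  by move=> /andP[pu pa] pb; have [-> -> ->] := IH pa pb; rewrite pu.
by move=> pa /andP[pv pb]; have [-> -> ->] := IH pa pb; rewrite (negbTE pv).
Qed.

End Interleave.

Lemma filter_nth_iota_mask (w : seq nat) s (p : pred nat) :
  [seq (i + s)%N | i <- iota 0 (size w) & p (nth 0%N w i)] =
  mask (map p w) (iota s (size w)).
Proof.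
elim: w s => [|y w IH] s //=.
have E : [seq (i + s)%N | i <- [seq i <- iota 1 (size w) | p (nth 0%N (y :: w) i)]]
        = mask [seq p i | i <- w] (iota s.+1 (size w)).
  rewrite -IH -(addn0 1%N) iotaDl filter_map -map_comp; apply: eq_map => i /=; lia.
by case: (p y); rewrite /= E.
Qed.

Lemma perm_interleave (T : eqType) m (a b : seq T) :
  fits m a b -> perm_eq (interleave m a b) (a ++ b).
Proof. by move=> fm; apply/permP => q; rewrite count_interleave // count_cat. Qed.

Lemma pairwise_interleave (T : eqType) (R : rel T) m (a b : seq T) :
  fits m a b -> {in a & b, forall u v, R u v && R v u} ->
  pairwise R (interleave m a b) = pairwise R a && pairwise R b.
Proof.
move: m a b; apply: fits_ind => [|m a b u fm IH|m a b v fm IH] //= Rab.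
  rewrite (perm_all _ (perm_interleave fm)) all_cat IH; last first.
    by move=> u' v' u'a v'b; apply: Rab; rewrite ?inE ?u'a ?orbT.
  have -> : all (R u) b by apply/allP => v vb; case/andP: (Rab u v (mem_head _ _) vb).
  by rewrite andbT andbA.
rewrite (perm_all _ (perm_interleave fm)) all_cat IH; last first.
  by move=> u' v' u'a v'b; apply: Rab; rewrite ?inE ?v'b ?orbT.
have -> : all (R v) a by apply/allP => u ua; case/andP: (Rab u v ua (mem_head _ _)).
by rewrite andbCA.
Qed.

Section PermutationSums.
Variable V : nmodType.
Local Open Scope ring_scope.

Lemma big_permutations_rem (T : eqType) (s : seq T) (G : seq T -> V) : uniq s -> s != [::] ->
  \sum_(w <- permutations s) G w =
  \sum_(y <- s) \sum_(t <- permutations (rem y s)) G (y :: t).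
Proof.
move=> us s0; rewrite (perm_big _ (permutationsE _)) ?lt0n ?size_eq0 //.
by rewrite big_allpairs_dep undup_id.
Qed.

Lemma big_permutations_map (T T' : eqType) (f : T -> T') (s : seq T) (G : seq T' -> V) :
  injective f -> uniq s ->
  \sum_(w <- permutations (map f s)) G w = \sum_(w <- permutations s) G (map f w).
Proof.
move=> fi; elim: {s}(size s) {-2}s (erefl (size s)) G => [|N IH] s Ns G us.
  by case: s Ns us => // _ _; rewrite /= !big_seq1.
have s0 : s != [::] by case: (s) Ns.
rewrite [RHS]big_permutations_rem // big_permutations_rem ?map_inj_uniq //;
  last by rewrite -size_eq0 size_map size_eq0.
rewrite big_map; apply: eq_big_seq => y ys.
have remf s' : rem (f y) (map f s') = map f (rem y s').
  by elim: s' => //= z s' IHs; rewrite (inj_eq fi); case: eqP => //= _; rewrite IHs.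
by rewrite remf IH ?rem_uniq // size_rem // Ns.
Qed.

Lemma big_permutations_cat (T : eqType) (A B : seq T) (G : seq T -> V) : uniq (A ++ B) ->
  \sum_(t <- permutations (A ++ B)) G t =
  \sum_(m <- shuffles (size A + size B) (size A)) \sum_(a <- permutations A)
     \sum_(b <- permutations B) G (interleave m a b).
Proof.
elim: {A B}(size A + size B)%N {-2}A {-2}B (erefl (size A + size B)%N) G
  => [|N IH] A B NAB G uAB.
  by case: A B NAB {uAB} => [|//] [|//] _; rewrite /= !big_seq1.
have [uA uB] : uniq A /\ uniq B by move: uAB; rewrite cat_uniq => /and3P[].
have dAB y : y \in B -> y \notin A.
  by move: uAB; rewrite cat_uniq => /and3P[_ /hasPn hn _] /hn.
rewrite NAB big_permutations_rem //; last by rewrite -size_eq0 size_cat NAB.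
rewrite /= !big_cat /=; congr (_ + _).
- case sA: (size A) => [|k]; first by move/size0nil: sA => ->; rewrite !big_nil.
  have A0 : A != [::] by rewrite -size_eq0 sA.
  rewrite big_map exchange_big big_permutations_rem //; apply: eq_big_seq => y yA.
  have NkB : (k + size B)%N = N by lia.
  rewrite rem_catl // IH ?size_rem ?sA /= ?NkB //; first by rewrite exchange_big.
  by rewrite -rem_catl // rem_uniq.
- have [B0|B0] := eqVneq B [::].
    by rewrite B0 big_nil shuffles_gt ?big_nil //; move: NAB; rewrite B0 addn0; lia.
  rewrite big_map.
  under [RHS]eq_bigr => m _ do under eq_bigr => a _ do
    rewrite (big_permutations_rem (fun b => G (interleave (false :: m) a b))) //.
  under [RHS]eq_bigr => m _ do rewrite exchange_big.
  rewrite [RHS]exchange_big; apply: eq_big_seq => y yB.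
  have NAB' : (size A + (size B).-1)%N = N by move: NAB B0; rewrite -size_eq0; lia.
  rewrite rem_catr ?dAB // IH ?size_rem ?NAB' //; last by rewrite -rem_catr ?dAB // rem_uniq.
Qed.

End PermutationSums.

Lemma mem_iota1 n i : (i \in iota 1 n) = inrange n i.
Proof. by rewrite mem_iota /inrange; lia. Qed.

Definition may_precede (le : rel nat) : rel nat := fun u v => ~~ Defs.ltP le v u.

Lemma linext_pairwise n le w :
  perm_eq w (iota 1 n) -> linext n le w = pairwise (may_precede le) w.
Proof.
move=> pw; rewrite /linext pw /=.
have uw : uniq w by rewrite (perm_uniq pw) iota_uniq.
have memw v : (v \in w) = inrange n v by rewrite (perm_mem pw) mem_iota1.
apply/forallP/(pairwiseP 0%N) => [H p q pw' qw' pq|H i].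
  apply/negP => lvu.
  have rv : inrange n (nth 0%N w q) by rewrite -memw mem_nth.
  have ru : inrange n (nth 0%N w p) by rewrite -memw mem_nth.
  have /forallP/(_ (inord (nth 0%N w p))) := H (inord (nth 0%N w q)).
  rewrite !inordK; try by move: rv ru; rewrite /inrange; lia.
  by rewrite rv ru lvu /= !index_uniq //; lia.
apply/forallP => j; apply/implyP => /andP[/andP[ri rj] lij].
have iw : (i : nat) \in w by rewrite memw.
have jw : (j : nat) \in w by rewrite memw.
rewrite ltnNge leq_eqVlt; apply/negP => /orP[/eqP e|lt].
  have : nth 0%N w (index (j : nat) w) = nth 0%N w (index (i : nat) w) by rewrite e.
  by rewrite !nth_index // => eji; move: lij; rewrite /Defs.ltP eji eqxx andbF.
have := H _ _ _ _ lt; rewrite !nth_index // /may_precede lij.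
by rewrite -!topredE /= !index_mem => /(_ jw iw).
Qed.

Definition forest_root n (le : rel nat) r :=
  inrange n r && all (fun j => ~~ Defs.ltP le j r) (iota 1 n).

Section Forest.
Variables (n : nat) (le : rel nat).
Hypothesis forest : is_forest n le.
Hypothesis rec : rec_labelled n le.

Lemma poset_refl i : inrange n i -> le i i.
Proof. by case: forest => -[h _ _] _; apply: h. Qed.

Lemma poset_anti i j : inrange n i -> inrange n j -> le i j -> le j i -> i = j.
Proof. by case: forest => -[_ h _] _; apply: h. Qed.

Lemma poset_trans i j k : inrange n i -> inrange n j -> inrange n k ->
  le i j -> le j k -> le i k.
Proof. by case: forest => -[_ _ h] _; apply: h. Qed.

Lemma poset_ltP_trans i j k : inrange n i -> inrange n j -> inrange n k ->
  Defs.ltP le i j -> le j k -> Defs.ltP le i k.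
Proof.
move=> ri rj rk /andP[lij nij] ljk; rewrite /Defs.ltP (poset_trans ri rj rk) //=.
by apply: contraNneq nij => eik; move: ljk; rewrite -eik => /(poset_anti ri rj lij) ->.
Qed.

Lemma root_not_above r i : forest_root n le r -> inrange n i -> i != r -> ~~ le i r.
Proof.
case/andP=> _ /allP H ri ir; apply/negP => lir.
by have := H i; rewrite mem_iota1 ri /Defs.ltP lir ir => /(_ isT).
Qed.

(* P_{>=i} is an interval containing i but not the root r. *)
Lemma upset_same_side r i j : forest_root n le r -> inrange n i -> i != r ->
  inrange n j -> le i j -> ((i < r) = (j < r))%N /\ j != r.
Proof.
move=> rr ri ir rj lij; have rR : inrange n r by case/andP: rr.
have [lo [hi H]] := rec ri.
have hi' := (H i ri).1 (poset_refl ri).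
have hj := (H j rj).1 lij.
have hr : ~~ (lo <= r <= hi)%N.
  by apply: contra (root_not_above rr ri ir) => /(H r rR).
split; first by apply/idP/idP; move: hi' hj hr; lia.
by apply/eqP => e; move: hj hr; rewrite e; lia.
Qed.

Let below j := count (fun i => Defs.ltP le i j) (iota 1 n).

Lemma below_lt i j : inrange n i -> inrange n j -> Defs.ltP le i j -> (below i < below j)%N.
Proof.
move=> ri rj lij; apply: count_lt_in.
  by move=> k; rewrite mem_iota1 => rk lki; apply: poset_ltP_trans lki _; case/andP: lij.
apply/hasP; exists i; first by rewrite mem_iota1.
by rewrite /= lij /Defs.ltP eqxx andbF.
Qed.

Lemma root_exists j : inrange n j -> exists2 r, forest_root n le r & le r j.
Proof.
elim: {j}(below j).+1 {-2}j (ltnSn (below j)) => [//|N IH] j lt rj.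
case rjb: (forest_root n le j); first by exists j => //; apply: poset_refl.
move: rjb; rewrite /forest_root rj /= => /negbT; rewrite -has_predC => /hasP[i].
rewrite mem_iota1 => ri /negbNE lij.
have [r rr lri] := IH i (leq_trans (below_lt ri rj lij) lt) ri.
exists r => //; apply: poset_trans lri _ => //; first by case/andP: rr.
by case/andP: lij.
Qed.

Lemma cover_exists a j : inrange n a -> inrange n j -> Defs.ltP le a j ->
  exists2 c, covers n le j c & le a c.
Proof.
pose between a := count (fun k => Defs.ltP le a k && Defs.ltP le k j) (iota 1 n).
elim: {a}(between a).+1 {-2}a (ltnSn (between a)) => [//|N IH] a lt ra rj laj.
case hk: (has (fun k => Defs.ltP le a k && Defs.ltP le k j) (iota 1 n)); last first.
  exists a; last exact: poset_refl.
  do 3!split=> //; case=> k [rk [lak lkj]].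
  by move/hasPn: hk => /(_ k); rewrite mem_iota1 rk lak lkj => /(_ isT).
case/hasP: hk => k; rewrite mem_iota1 => rk /andP[lak lkj].
have ltb : (between k < between a)%N.
  apply: count_lt_in => [k'|]; first rewrite mem_iota1 => rk' /andP[lkk' ->].
    by rewrite andbT (poset_ltP_trans ra rk rk' lak) //; case/andP: lkk'.
  by apply/hasP; exists k; rewrite ?mem_iota1 //= lak lkj /Defs.ltP eqxx andbF.
have [c cc lkc] := IH k (leq_trans ltb lt) rk rj lkj.
exists c => //; apply: poset_trans lkc => //; first by case: cc.
by case/andP: lak.
Qed.

(* a and b both lie below the unique element covered by j. *)
Lemma below_chain j a b : inrange n j -> inrange n a -> inrange n b ->
  le a j -> le b j -> le a b || le b a.
Proof.
elim: {j}(below j).+1 {-2}j (ltnSn (below j)) => [//|N IH] j lt rj ra rb laj lbj.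
have [->|naj] := eqVneq a j; first by rewrite lbj orbT.
have [->|nbj] := eqVneq b j; first by rewrite laj.
have [c cc lac] := cover_exists ra rj (introT andP (conj laj naj)).
have [c' cc' lbc'] := cover_exists rb rj (introT andP (conj lbj nbj)).
have ecc' : c = c' by case: forest => _ /(_ j); apply.
case: cc => rc [_ [lcj _]]; subst c'.
exact: IH (leq_trans (below_lt rc rj lcj) lt) rc ra rb lac lbc'.
Qed.

Lemma root_unique j r1 r2 : inrange n j -> forest_root n le r1 -> forest_root n le r2 ->
  le r1 j -> le r2 j -> r1 = r2.
Proof.
move=> rj rr1 rr2 l1 l2.
have [ri1 ri2] : inrange n r1 /\ inrange n r2 by case/andP: rr1; case/andP: rr2.
have [//|ne] := eqVneq r1 r2.
case/orP: (below_chain rj ri1 ri2 l1 l2) => h.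
  by move: (root_not_above rr2 ri1 ne); rewrite h.
by rewrite eq_sym in ne; move: (root_not_above rr1 ri2 ne); rewrite h.
Qed.

End Forest.

Definition shift_rel (le : rel nat) r : rel nat := fun i j => le (r + i)%N (r + j)%N.

Section RootSplit.
Variables (n : nat) (le : rel nat) (r : nat).
Hypothesis forest : is_forest n le.
Hypothesis rec : rec_labelled n le.
Hypothesis root : forest_root n le r.

Lemma root_inrange : inrange n r. Proof. by case/andP: root. Qed.

Lemma forest_lower : is_forest r.-1 le /\ rec_labelled r.-1 le.
Proof.
have rR := root_inrange.
have inr i : inrange r.-1 i -> inrange n i by rewrite /inrange; move: rR; rewrite /inrange; lia.
split; last first.
  move=> i ri; have [lo [hi H]] := rec (inr i ri).
  by exists lo, hi => j rj; apply: H; apply: inr.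
split.
  split.
  - by move=> i /inr; exact: (poset_refl forest).
  - by move=> i j /inr ri /inr rj; exact: (poset_anti forest ri rj).
  - by move=> i j k /inr ri /inr rj /inr rk; exact: (poset_trans forest ri rj rk).
have cov j i : covers r.-1 le j i -> covers n le j i.
  move=> [ri [rj [lij nk]]]; split; first exact: inr.
  split; first exact: inr.
  split=> // -[k [rk [lik lkj]]]; apply: nk; exists k; split=> //.
  have ir : i != r by apply/eqP => e; move: ri; rewrite e /inrange; lia.
  have [h1 _] := upset_same_side forest rec root (inr i ri) ir rk (proj1 (andP lik)).
  by move: ri rk h1; rewrite /inrange; lia.
by move=> j i i' rj ci ci'; case: forest => _ /(_ j i i' (inr j rj)); apply; apply: cov.
Qed.

Lemma forest_upper :
  is_forest (n - r) (shift_rel le r) /\ rec_labelled (n - r) (shift_rel le r).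
Proof.
have rR := root_inrange.
have inr i : inrange (n - r) i -> inrange n (r + i).
  by rewrite /inrange; move: rR; rewrite /inrange; lia.
split; last first.
  move=> i ri; have [lo [hi H]] := rec (inr i ri).
  exists (lo - r)%N, (hi - r)%N => j rj; rewrite /shift_rel (H _ (inr j rj)).
  by move: rj; rewrite /inrange => rj; split; lia.
split.
  split.
  - by move=> i /inr; exact: (poset_refl forest).
  - by move=> i j /inr ri /inr rj h1 h2; have := poset_anti forest ri rj h1 h2; lia.
  - by move=> i j k /inr ri /inr rj /inr rk; exact: (poset_trans forest ri rj rk).
have cov j i : covers (n - r) (shift_rel le r) j i -> covers n le (r + j) (r + i).
  move=> [ri [rj [lij nk]]]; split; first exact: inr.
  split; first exact: inr.
  split; first by move: lij; rewrite /Defs.ltP /shift_rel eqn_add2l.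
  move=> -[k [rk [lik lkj]]]; apply: nk; exists (k - r)%N.
  have ir : (r + i)%N != r by move: ri; rewrite /inrange; lia.
  have [h1 h2] := upset_same_side forest rec root (inr i ri) ir rk (proj1 (andP lik)).
  have ek : (r + (k - r))%N = k by move: ri rk h1; rewrite /inrange; lia.
  split; first by move: rk ek h2 rR; rewrite /inrange; lia.
  by rewrite /Defs.ltP /shift_rel -(eqn_add2l r i) -(eqn_add2l r (k - r)) ek.
move=> j i i' rj ci ci'; case: forest => _ H.
by have := H (r + j)%N (r + i)%N (r + i')%N (inr j rj) (cov _ _ ci) (cov _ _ ci'); lia.
Qed.

End RootSplit.

Section Upsets.
Variables (n : nat) (le : rel nat).
Hypothesis forest : is_forest n le.
Hypothesis rec : rec_labelled n le.

Lemma upset_interval i : inrange n i ->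
  [/\ upset n le i = iota (minup n le i) (hgt n le i),
      (0 < minup n le i)%N & (0 < hgt n le i)%N].
Proof.
move=> ri; have [lo [hi H]] := rec ri.
have E : upset n le i = iota (maxn lo 1) (minn hi.+1 (1 + n) - maxn lo 1).
  rewrite /upset -filter_iota_interval; apply: eq_in_filter => j.
  by rewrite mem_iota1 => rj; apply/idP/idP => /(H j rj).
have := (H i ri).1 (poset_refl forest ri); move: ri; rewrite /inrange => ri lih.
have h0 : (0 < minn hi.+1 (1 + n) - maxn lo 1)%N by lia.
have a_le_n : (maxn lo 1 <= n)%N by lia.
by rewrite /hgt /minup E size_iota (bigmin_iota h0 a_le_n); split=> //; lia.
Qed.

Lemma minup_head i : inrange n i -> minup n le i = head 0%N (upset n le i).
Proof. by case/upset_interval=> -> _; case: hgt. Qed.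

End Upsets.

Section RootUpsets.
Variables (n : nat) (le : rel nat) (r : nat).
Hypothesis forest : is_forest n le.
Hypothesis rec : rec_labelled n le.
Hypothesis root : forest_root n le r.

Lemma upset_lower i : inrange r.-1 i -> upset n le i = upset r.-1 le i.
Proof.
move=> ri; have := root_inrange root; rewrite /inrange => rR.
have ri' : inrange n i by move: ri; rewrite /inrange; lia.
have ir : i != r by apply/eqP => e; move: ri; rewrite e /inrange; lia.
have En : n = (r.-1 + (n - r.-1))%N by lia.
rewrite /upset {1}En iotaD filter_cat.
suff -> : [seq j <- iota (1 + r.-1) (n - r.-1) | le i j] = [::] by rewrite cats0.
apply/eqP/negbNE; rewrite -has_filter; apply/hasPn => j; rewrite mem_iota => hj.
apply/negP => lij; have rj : inrange n j by rewrite /inrange; lia.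
by have [+ _] := upset_same_side forest rec root ri' ir rj lij; move: ri; rewrite /inrange; lia.
Qed.

Lemma upset_upper i : inrange (n - r) i ->
  upset n le (r + i) = map (addn r) (upset (n - r) (shift_rel le r) i).
Proof.
move=> ri; have := root_inrange root; rewrite /inrange => rR.
have ri' : inrange n (r + i) by move: ri; rewrite /inrange; lia.
have ir : (r + i)%N != r by move: ri; rewrite /inrange; lia.
have En : n = (r + (n - r))%N by lia.
rewrite /upset {1}En iotaD filter_cat.
rewrite add1n (iota_shift r) filter_map.
suff -> : [seq j <- iota 1 r | le (r + i) j] = [::] by [].
apply/eqP/negbNE; rewrite -has_filter; apply/hasPn => j; rewrite mem_iota => hj.
apply/negP => lij; have rj : inrange n j by rewrite /inrange; lia.
by have [] := upset_same_side forest rec root ri' ir rj lij; lia.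
Qed.

Lemma hgt_lower i : inrange r.-1 i -> hgt n le i = hgt r.-1 le i.
Proof. by move=> ri; rewrite /hgt upset_lower. Qed.

Lemma minup_lower i : inrange r.-1 i -> minup n le i = minup r.-1 le i.
Proof.
move=> ri; have [forestL recL] := forest_lower forest rec root.
have ri' : inrange n i.
  by move: ri (root_inrange root); rewrite /inrange; lia.
by rewrite (minup_head forest rec ri') (minup_head forestL recL ri) upset_lower.
Qed.

Lemma hgt_upper i : inrange (n - r) i -> hgt n le (r + i) = hgt (n - r) (shift_rel le r) i.
Proof. by move=> ri; rewrite /hgt upset_upper // size_map. Qed.

Lemma minup_upper i : inrange (n - r) i ->
  minup n le (r + i) = (r + minup (n - r) (shift_rel le r) i)%N.
Proof.
move=> ri; have [forestU recU] := forest_upper forest rec root.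
have ri' : inrange n (r + i).
  by move: ri (root_inrange root); rewrite /inrange; lia.
rewrite (minup_head forest rec ri') upset_upper //.
by case: (upset_interval forestU recU ri) => -> _; case: hgt.
Qed.

End RootUpsets.

Lemma linext_interleave n le r m a b : is_forest n le -> rec_labelled n le ->
  (0 < r <= n)%N ->
  perm_eq a (iota 1 r.-1) -> perm_eq b (iota 1 (n - r)) -> fits m a b ->
  linext n le (r :: interleave m a (map (addn r) b)) =
  [&& forest_root n le r, linext r.-1 le a & linext (n - r) (shift_rel le r) b].
Proof.
move=> forest rec rn pa pb fm.
have fm' : fits m a (map (addn r) b) by rewrite /fits size_map.
have pw : perm_eq (r :: interleave m a (map (addn r) b)) (iota 1 n).
  rewrite (iota_split_at rn) perm_sym -cat1s perm_catCA /= perm_cons perm_sym.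
  apply: (perm_trans (perm_interleave fm')); apply: perm_cat => //.
  by rewrite iota_shift; apply: perm_map.
rewrite !linext_pairwise // pairwise_cons.
have rR : inrange n r by rewrite /inrange; lia.
have -> : all (may_precede le r) (interleave m a (map (addn r) b)) = forest_root n le r.
  rewrite /forest_root rR -(perm_all _ pw) /= {1}/may_precede /Defs.ltP eqxx andbF /=.
  exact: eq_all.
case rr: (forest_root n le r) => //=.
rewrite pairwise_interleave //.
  congr (_ && _); rewrite pairwise_map; apply: eq_pairwise => u v.
  by rewrite /= /may_precede /Defs.ltP /shift_rel eqn_add2l.
move=> u v; rewrite (perm_mem pa) mem_iota => hu /mapP[j].
rewrite (perm_mem pb) mem_iota => hj ->.
have ru : inrange n u by rewrite /inrange; lia.
have rv : inrange n (r + j) by rewrite /inrange; lia.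
have ur : u != r by lia.
have vr : (r + j)%N != r by lia.
apply/andP; split; apply/negP => /andP[lt _].
  by have [+ _] := upset_same_side forest rec rr rv vr ru lt; lia.
by have [+ _] := upset_same_side forest rec rr ru ur rv lt; lia.
Qed.

Section PermutationsOfIota.
Variable V : nmodType.
Local Open Scope ring_scope.

Lemma big_permutations_iota n (G : seq nat -> V) : (0 < n)%N ->
  \sum_(w <- permutations (iota 1 n)) G w =
  \sum_(r <- iota 1 n) \sum_(m <- shuffles n.-1 r.-1)
    \sum_(a <- permutations (iota 1 r.-1)) \sum_(b <- permutations (iota 1 (n - r)))
      G (r :: interleave m a (map (addn r) b)).
Proof.
move=> n0; rewrite big_permutations_rem ?iota_uniq -?size_eq0 ?size_iota -?lt0n //.
apply: eq_big_seq => r; rewrite mem_iota1 => /andP[r0 rn].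
have rn' : (0 < r <= n)%N by rewrite r0.
have Erem : rem r (iota 1 n) = iota 1 r.-1 ++ map (addn r) (iota 1 (n - r)).
  rewrite (iota_split_at rn') rem_catr; last by rewrite mem_iota; lia.
  by congr (_ ++ _); rewrite /= eqxx (iota_shift r).
have urem : uniq (rem r (iota 1 n)) by rewrite rem_uniq ?iota_uniq.
rewrite Erem big_permutations_cat -?Erem // size_map !size_iota.
rewrite (_ : (r.-1 + (n - r))%N = n.-1); last by lia.
apply: eq_bigr => m _; apply: eq_bigr => a _.
by rewrite (big_permutations_map (fun b => G (r :: interleave m a b))) ?iota_uniq //; exact: addnI.
Qed.

End PermutationsOfIota.

Local Open Scope ring_scope.

Section IterMorphism.
Variables (R : pzSemiRingType) (F : {rmorphism R -> R}).

Lemma iter_rmorph0 k : iter k F 0 = 0.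
Proof. by elim: k => //= k ->; rewrite rmorph0. Qed.

Lemma iter_rmorph1 k : iter k F 1 = 1.
Proof. by elim: k => //= k ->; rewrite rmorph1. Qed.

Lemma iter_rmorphD k a b : iter k F (a + b) = iter k F a + iter k F b.
Proof. by elim: k => //= k ->; rewrite rmorphD. Qed.

Lemma iter_rmorphM k a b : iter k F (a * b) = iter k F a * iter k F b.
Proof. by elim: k => //= k ->; rewrite rmorphM. Qed.

Lemma iter_rmorph_sum k I (r : seq I) (P : pred I) (f : I -> R) :
  iter k F (\sum_(i <- r | P i) f i) = \sum_(i <- r | P i) iter k F (f i).
Proof. by elim/big_rec2: _ => [|i y1 y2 _ <-]; rewrite ?iter_rmorph0 ?iter_rmorphD. Qed.

Lemma iter_rmorph_prod k I (r : seq I) (P : pred I) (f : I -> R) :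
  iter k F (\prod_(i <- r | P i) f i) = \prod_(i <- r | P i) iter k F (f i).
Proof. by elim/big_rec2: _ => [|i y1 y2 _ <-]; rewrite ?iter_rmorph1 ?iter_rmorphM. Qed.

End IterMorphism.

Section IterFieldMorphism.
Variables (K : fieldType) (F : {rmorphism K -> K}).

Lemma iter_fmorphV k a : iter k F a^-1 = (iter k F a)^-1.
Proof. by elim: k => //= k ->; rewrite fmorphV. Qed.

Lemma iter_fmorph_div k a b : iter k F (a / b) = iter k F a / iter k F b.
Proof. by rewrite iter_rmorphM iter_fmorphV. Qed.

Lemma iter_fmorph_eq0 k a : (iter k F a == 0) = (a == 0).
Proof. by elim: k => //= k <-; rewrite fmorph_eq0. Qed.

End IterFieldMorphism.

Lemma sum_indep_iota_neq0 (K : fieldType) (x : nat -> K) c m :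
  alg_indep x -> (0 < m)%N -> \sum_(i <- iota c.+1 m) x i != 0.
Proof.
move=> indep m0; set M := (c + m).+1.
pose p : {mpoly int[M]} := \sum_(i <- iota c.+1 m) 'X_(inord i).
have := indep M p; rewrite raddf_sum.
have -> : \sum_(i <- iota c.+1 m) mmap intr (fun i : 'I_M => x i) 'X_(inord i) =
          \sum_(i <- iota c.+1 m) x i.
  apply: eq_big_seq => i; rewrite mem_iota => hi.
  by rewrite mmapX mmap1U inordK //; rewrite /M; lia.
apply; apply/eqP => /(congr1 (mcoeff U_(@inord (c + m) c.+1))).
rewrite raddf_sum mcoeff0 (bigD1_seq c.+1) ?iota_uniq ?mem_iota //=; last by lia.
rewrite mcoeffXU eqxx big1_seq ?addr0 // => i /andP[ne]; rewrite mem_iota => hi.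
rewrite mcoeffXU; case: eqP => // /(congr1 (@nat_of_ord _)).
by rewrite !inordK /M; lia.
Qed.

Section Brackets.
Variables (K : fieldType) (x : nat -> K) (F : {rmorphism K -> K}).
Hypothesis Fx : forall i, F (x i) = x i.+1.

Lemma iterFx k i : iter k F (x i) = x (k + i)%N.
Proof. by elim: k => //= k ->; rewrite Fx. Qed.

Lemma brk_iota m : brk x m = \sum_(i <- iota 1 m) x i.
Proof. by rewrite /brk /index_iota subn1. Qed.

Lemma iter_brk c m : iter c F (brk x m) = \sum_(i <- iota c.+1 m) x i.
Proof.
rewrite brk_iota iter_rmorph_sum (iota_shift c) big_map.
by apply: eq_bigr => i _; rewrite iterFx.
Qed.

Lemma brk0 : brk x 0 = 0.
Proof. by rewrite brk_iota big_nil. Qed.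

Lemma brkD k m : brk x k + iter k F (brk x m) = brk x (k + m).
Proof. by rewrite iter_brk !brk_iota iotaD -big_cat add1n. Qed.

Lemma brkfactS n : brkfact x F n.+1 = brk x n.+1 * F (brkfact x F n).
Proof. by rewrite /brkfact big_ord_recl /= subn0 rmorph_prod. Qed.

Hypothesis indep : alg_indep x.

Lemma iter_brk_neq0 c m : (0 < m)%N -> iter c F (brk x m) != 0.
Proof. by move=> m0; rewrite iter_brk; apply: sum_indep_iota_neq0. Qed.

Lemma brkfact_neq0 k : brkfact x F k != 0.
Proof. by apply/prodf_neq0 => j _; apply: iter_brk_neq0; rewrite subn_gt0. Qed.

End Brackets.

Section ShuffleWeights.
Variables (K : fieldType) (x : nat -> K) (F : {rmorphism K -> K}).
Hypothesis Fx : forall i, F (x i) = x i.+1.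

Definition wt_num (s : seq nat) : K :=
  \prod_(j < size s) iter (nth 0%N s j).-1 F (brk x j.+1).

Definition brkfall (L k : nat) : K := \prod_(j < k) iter j F (brk x (L - j)).

Lemma wt_num_rcons s c : wt_num (rcons s c) = wt_num s * iter c.-1 F (brk x (size s).+1).
Proof.
rewrite /wt_num size_rcons big_ord_recr /= nth_rcons ltnn eqxx; congr (_ * _).
by apply: eq_bigr => j _; rewrite nth_rcons ltn_ord.
Qed.

Lemma brkfall_gt L k : (L < k)%N -> brkfall L k = 0.
Proof. by move=> lt; rewrite /brkfall (bigD1 (Ordinal lt)) //= subnn brk0 iter_rmorph0 mul0r. Qed.

Lemma brkfallS L k : brkfall L.+1 k.+1 = F (brkfall L k) * brk x k.+1 + F (brkfall L k.+1).
Proof.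
have -> : brkfall L.+1 k.+1 = brk x L.+1 * F (brkfall L k).
  by rewrite /brkfall big_ord_recl /= subn0 rmorph_prod.
have -> : F (brkfall L k.+1) = F (brkfall L k) * iter k.+1 F (brk x (L - k)).
  by rewrite /brkfall big_ord_recr /= rmorphM.
rewrite -mulrDr mulrC; have [le_kL|lt_Lk] := leqP k L.
  by rewrite (brkD Fx) (_ : (k.+1 + (L - k))%N = L.+1) //; lia.
by rewrite brkfall_gt // rmorph0 !mul0r.
Qed.

Lemma brkfall_brkfact L k : (k <= L)%N ->
  brkfall L k * iter k F (brkfact x F (L - k)) = brkfact x F L.
Proof.
move=> le_kL; rewrite /brkfact /brkfall iter_rmorph_prod.
have E : L = (k + (L - k))%N by lia.
rewrite [in RHS]E big_split_ord /=; congr (_ * _); first by apply: eq_bigr => j _; rewrite -E.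
by apply: eq_bigr => j _; rewrite -iterD; congr (iter _ F (brk x _)); lia.
Qed.

Lemma sum_wt_num_shuffles L k c : (0 < c)%N ->
  \sum_(m <- shuffles L k) wt_num (rev (mask m (iota c L))) = iter c.-1 F (brkfall L k).
Proof.
elim: L k c => [|L IH] k c c0.
  case: k => [|k]; first by rewrite /= big_seq1 /wt_num /brkfall !big_ord0 iter_rmorph1.
  by rewrite /= big_nil brkfall_gt // iter_rmorph0.
rewrite /= big_cat /= !big_map IH //.
case: k => [|k]; first by rewrite big_nil add0r /brkfall !big_ord0 !iter_rmorph1.
rewrite brkfallS big_map /=.
have -> : \sum_(j <- shuffles L k) wt_num (rev (c :: mask j (iota c.+1 L))) =
          iter c F (brkfall L k) * iter c.-1 F (brk x k.+1).
  rewrite -(IH k c.+1) // mulr_suml; apply: eq_big_seq => m /mem_shuffles [Sm Cm].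
  by rewrite rev_cons wt_num_rcons size_rev size_mask ?size_iota ?Cm.
by case: c c0 => // c _; rewrite /= iter_rmorphD iter_rmorphM -!iterSr.
Qed.

Lemma wt_set_mask m c :
  wt_set x F (mask m (iota c (size m))) =
  wt_num (rev (mask m (iota c (size m)))) / brkfact x F (count id m).
Proof.
rewrite /wt_set /wt_num.
have -> : sort geq (mask m (iota c (size m))) = rev (mask m (iota c (size m))).
  apply: (sorted_eq (leT := geq)) => [a b d h1 h2|a b /andP[? ?]||| ].
  - exact: leq_trans h2 h1.
  - by apply/eqP; rewrite eqn_leq; apply/andP.
  - by apply: sort_sorted => a b; exact: leq_total.
  - rewrite rev_sorted; apply: (sorted_mask leq_trans).
    by apply: (sub_sorted (@ltnW)); exact: iota_ltn_sorted.
  - by rewrite perm_sort perm_sym perm_rev.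
by rewrite size_rev size_mask ?size_iota.
Qed.

Lemma sum_wt_set_shuffles L k :
  \sum_(m <- shuffles L k) wt_set x F (mask m (iota 2 L)) = F (brkfall L k) / brkfact x F k.
Proof.
rewrite -[F _]/(iter 2.-1 F _) -sum_wt_num_shuffles // mulr_suml.
by apply: eq_big_seq => m /mem_shuffles[<- <-]; rewrite wt_set_mask.
Qed.

End ShuffleWeights.

Section PermWeight.
Variables (K : fieldType) (x : nat -> K) (F : K -> K).

Lemma wt_perm_fuel_enough f1 f2 w : 0%N \notin w ->
  (size w <= f1)%N -> (size w <= f2)%N ->
  wt_perm_fuel x F f1 w = wt_perm_fuel x F f2 w.
Proof.
elim: f1 f2 w => [|f1 IH] [|f2] [|r t] //=; rewrite inE negb_or eq_sym.
case/andP=> r0 t0 s1 s2; rewrite -lt0n in r0.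
have -> : (r <= r.-1)%N = false by lia.
have -> : (r.-1.+1 < r)%N = false by lia.
have hs q : (size (filter q t) <= size t)%N by rewrite size_filter count_size.
congr (_ * _ * F (iter _ F _)); apply: IH; rewrite ?size_map;
  try by apply: leq_trans (hs _) _; rewrite -ltnS.
- by rewrite mem_filter negb_and t0 orbT.
- by apply/mapP => -[v]; rewrite mem_filter => /andP[lt _]; lia.
Qed.

Lemma wt_perm_cons r t : (0 < r)%N -> 0%N \notin t ->
  wt_perm x F (r :: t) =
  wt_set x F (mask (map (fun v => v <= r.-1)%N t) (iota 2 (size t)))
  * wt_perm x F (filter (fun v => v <= r.-1)%N t)
  * iter r F (wt_perm x F (map (subn^~ r) (filter (fun v => r < v)%N t))).
Proof.
move=> r0 t0; rewrite {1}/wt_perm /= (_ : r.-1.+1 = r); last by lia.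
have r_gt : (r <= r.-1)%N = false by lia.
have E : [seq i.+1 | i <- iota 0 (size t).+1 & (nth 0%N (r :: t) i <= r.-1)%N]
       = mask (map (fun v => v <= r.-1)%N t) (iota 2 (size t)).
  rewrite -(eq_map (fun i => addn1 i)).
  by rewrite (filter_nth_iota_mask (r :: t) 1 (fun v => v <= r.-1)%N) /= r_gt.
rewrite E r_gt ltnn /= -iterS prednK //.
have hs q : (size (filter q t) <= size t)%N by rewrite size_filter count_size.
congr (_ * _ * iter r F _); apply: wt_perm_fuel_enough; rewrite ?size_map //.
- by rewrite mem_filter negb_and t0 orbT.
- by apply/mapP => -[v]; rewrite mem_filter => /andP[lt _]; lia.
Qed.

Lemma wt_perm_interleave r m a b : (0 < r)%N -> fits m a b ->
  all (fun v => 0 < v <= r.-1)%N a -> 0%N \notin b ->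
  wt_perm x F (r :: interleave m a (map (addn r) b)) =
  wt_set x F (mask m (iota 2 (size m))) * wt_perm x F a * iter r F (wt_perm x F b).
Proof.
move=> r0 fm pa b0; set w := interleave _ _ _.
have fm' : fits m a (map (addn r) b) by rewrite /fits size_map.
have memw v : (v \in w) = (v \in a) || (v \in map (addn r) b).
  by rewrite -!has_pred1 !has_count count_interleave // addn_gt0.
have [fa fb ma] : [/\ filter (fun v => v <= r.-1)%N w = a,
    filter (predC (fun v => v <= r.-1)%N) w = map (addn r) b &
    map (fun v => v <= r.-1)%N w = m].
  apply: interleave_split => //; first by apply: sub_all pa => v /andP[].
  by apply/allP => v /mapP[u _ ->] /=; lia.
have fb' : filter (fun v => r < v)%N w = map (addn r) b.
  rewrite -[RHS]fb; apply: eq_in_filter => v; rewrite memw => /orP[va|].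
    by move/allP: pa => /(_ v va) /= h; apply/idP/idP; lia.
  move=> /mapP[u ub ->] /=; have : u != 0%N by apply: contraNneq b0 => <-.
  by move=> h; apply/idP/idP; lia.
have w0 : 0%N \notin w.
  rewrite memw negb_or; apply/andP; split; first by apply/negP => /(allP pa).
  by apply/mapP => -[u _] /esym; lia.
by rewrite wt_perm_cons // ma fa size_interleave // fb' (mapK (addKn r)).
Qed.

End PermWeight.

Lemma mulr_sum3 (R : pzSemiRingType) (I J L : Type) (s1 : seq I) (s2 : seq J) (s3 : seq L)
    (X : I -> R) (Y : J -> R) (Z : L -> R) :
  \sum_(i <- s1) \sum_(j <- s2) \sum_(k <- s3) X i * Y j * Z k =
  (\sum_(i <- s1) X i) * (\sum_(j <- s2) Y j) * (\sum_(k <- s3) Z k).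
Proof.
rewrite !mulr_suml; apply: eq_bigr => i _.
rewrite [X i * _]mulr_sumr mulr_suml; apply: eq_bigr => j _.
by rewrite mulr_sumr.
Qed.

Section HookFormula.
Variables (K : fieldType) (x : nat -> K) (F : {rmorphism K -> K}).
Hypothesis Fx : forall i, F (x i) = x i.+1.
Hypothesis indep : alg_indep x.

Definition hook n le i := iter (minup n le i).-1 F (brk x (hgt n le i)).
Definition hook_prod n le := \prod_(i <- iota 1 n) hook n le i.
Definition linext_sum n le :=
  \sum_(w <- permutations (iota 1 n) | linext n le w) wt_perm x F w.

Lemma hook_neq0 n le i : is_forest n le -> rec_labelled n le -> inrange n i ->
  hook n le i != 0.
Proof. by move=> forest rec /(upset_interval forest rec) [_ _]; apply: iter_brk_neq0. Qed.

Lemma hook_prod_neq0 n le : is_forest n le -> rec_labelled n le -> hook_prod n le != 0.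
Proof.
move=> forest rec; rewrite /hook_prod prodf_seq_neq0.
by apply/allP => i; rewrite mem_iota1 => ri; apply/implyP => _; apply: hook_neq0.
Qed.

Lemma hook_upset n le i : is_forest n le -> rec_labelled n le -> inrange n i ->
  hook n le i = \sum_(j <- upset n le i) x j.
Proof.
move=> forest rec /(upset_interval forest rec) [U m0 _].
by rewrite /hook (iter_brk Fx) prednK // U.
Qed.

Lemma sum_root_hooks n le : is_forest n le -> rec_labelled n le ->
  \sum_(r <- iota 1 n | forest_root n le r) hook n le r = brk x n.
Proof.
move=> forest rec; rewrite big_seq_cond.
rewrite (eq_bigr (fun r => \sum_(j <- iota 1 n | le r j) x j)); last first.
  by move=> r /andP[]; rewrite mem_iota1 => ri _; rewrite hook_upset // big_filter.
rewrite -big_seq_cond (exchange_big_dep predT) //= brk_iota; apply: eq_big_seq => j.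
rewrite mem_iota1 => rj; have [r0 rr0 l0] := root_exists forest rj.
have ri0 : inrange n r0 by case/andP: rr0.
rewrite big_const_seq (@eq_in_count _ _ (pred1 r0)).
  by rewrite count_uniq_mem ?iota_uniq // mem_iota1 ri0 /= addr0.
move=> r; rewrite mem_iota1 => rr /=; apply/idP/eqP => [/andP[h1 h2]|->].
  exact: (root_unique forest rj h1 rr0 h2 l0).
by rewrite rr0 l0.
Qed.

Lemma hook_prod_split n le r : is_forest n le -> rec_labelled n le -> forest_root n le r ->
  hook_prod n le =
  hook_prod r.-1 le * hook n le r * iter r F (hook_prod (n - r) (shift_rel le r)).
Proof.
move=> forest rec root; have [forestU recU] := forest_upper forest rec root.
have rn : (0 < r <= n)%N by have := root_inrange root.
rewrite /hook_prod (iota_split_at rn) big_cat /= big_cons mulrA; congr (_ * _ * _).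
  apply: eq_big_seq => i; rewrite mem_iota => hi.
  have ri : inrange r.-1 i by rewrite /inrange; lia.
  by rewrite /hook (minup_lower forest rec root ri) (hgt_lower forest rec root ri).
rewrite iota_shift big_map iter_rmorph_prod; apply: eq_big_seq => i; rewrite mem_iota1 => ri.
have [_ + _] := upset_interval forestU recU ri.
rewrite /hook (minup_upper forest rec root ri) (hgt_upper forest rec root ri) -iterD.
by case: minup => // m _; rewrite addnS.
Qed.

Lemma linext_sum_rec n le : is_forest n le -> rec_labelled n le -> (0 < n)%N ->
  linext_sum n le = \sum_(r <- iota 1 n | forest_root n le r)
    F (brkfall x F n.-1 r.-1) / brkfact x F r.-1 * linext_sum r.-1 le
    * iter r F (linext_sum (n - r) (shift_rel le r)).
Proof.
move=> forest rec n0; rewrite /linext_sum big_mkcond big_permutations_iota //.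
rewrite [RHS]big_mkcond; apply: eq_big_seq => r; rewrite mem_iota1 => rR.
have rn : (0 < r <= n)%N by [].
have r0 : (0 < r)%N by case/andP: rn.
pose Y n' le' w := if linext n' le' w then wt_perm x F w else 0.
transitivity (\sum_(m <- shuffles n.-1 r.-1) \sum_(a <- permutations (iota 1 r.-1))
   \sum_(b <- permutations (iota 1 (n - r)))
   ((if forest_root n le r then 1 else 0) * wt_set x F (mask m (iota 2 n.-1)))
   * Y r.-1 le a * iter r F (Y (n - r)%N (shift_rel le r) b)).
  apply: eq_big_seq => m /mem_shuffles [Sm Cm].
  apply: eq_big_seq => a; rewrite mem_permutations => pa.
  apply: eq_big_seq => b; rewrite mem_permutations => pb.
  have [sa sb] : size a = r.-1 /\ size b = (n - r)%N.
    by rewrite (perm_size pa) (perm_size pb) !size_iota.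
  have fm : fits m a b by rewrite /fits sa sb Sm Cm !eqxx; lia.
  rewrite (linext_interleave forest rec rn pa pb fm) // wt_perm_interleave //; last first.
  - by rewrite (perm_mem pb) mem_iota.
  - by apply/allP => v; rewrite (perm_mem pa) mem_iota; lia.
  rewrite /Y Sm; case: (forest_root n le r); case: (linext r.-1 le a);
    by case: (linext (n - r) (shift_rel le r) b); rewrite /= ?iter_rmorph0 ?mul1r ?mulr0 ?mul0r.
rewrite mulr_sum3 -iter_rmorph_sum -!big_mkcond -mulr_sumr sum_wt_set_shuffles //.
by case: (forest_root n le r); rewrite ?mul1r ?mul0r.
Qed.

Lemma linext_sum0 le : linext_sum 0 le = 1.
Proof.
rewrite /linext_sum /= big_cons big_nil addr0.
suff -> : linext 0 le [::] by [].
by apply/andP; split=> //; apply/'forall_'forall_implyP; case=> [[|i]] //= _ j /andP[/andP[]].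
Qed.

Lemma linext_sum_hook n le : is_forest n le -> rec_labelled n le ->
  linext_sum n le = brkfact x F n / hook_prod n le.
Proof.
have base le' : linext_sum 0 le' = brkfact x F 0 / hook_prod 0 le'.
  by rewrite linext_sum0 /hook_prod /brkfact big_ord0 big_nil divr1.
elim: n {-2}n (leqnn n) le => [|N IH] [|n] // nN le forest rec; try exact: base.
rewrite linext_sum_rec //= brkfactS -(sum_root_hooks forest rec) !mulr_suml.
apply: eq_bigr => r root.
have rn : (0 < r <= n.+1)%N by have := root_inrange root.
have [forestL recL] := forest_lower forest rec root.
have [forestU recU] := forest_upper forest rec root.
rewrite (IH r.-1) ?(IH (n.+1 - r)%N) //; try lia.
have brkfact_split : F (brkfall x F n r.-1) * iter r F (brkfact x F (n.+1 - r)) = F (brkfact x F n).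
  rewrite -(@brkfall_brkfact _ x F n r.-1) ?rmorphM -?iterS ?prednK //; try lia.
  by congr (_ * iter _ F (brkfact x F _)); lia.
rewrite iter_fmorph_div (hook_prod_split forest rec root) -brkfact_split.
have hh := hook_neq0 forest rec (root_inrange root).
have hL := hook_prod_neq0 forestL recL.
have hB := brkfact_neq0 Fx indep r.-1.
have hU : iter r F (hook_prod (n.+1 - r) (shift_rel le r)) != 0.
  by rewrite iter_fmorph_eq0 hook_prod_neq0.
by field; rewrite hU hh hL hB.
Qed.
End HookFormula.

Theorem theorem1p1 (K : fieldType) (x : nat -> K) (F : {rmorphism K -> K})
    (n : nat) (le : rel nat) :
  alg_indep x ->
  (forall i, F (x i) = x i.+1) ->
  is_forest n le -> rec_labelled n le ->
  \sum_(w <- permutations (iota 1 n) | linext n le w) wt_perm x F w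
  = brkfact x F n /
    \prod_(i <- iota 1 n) iter (minup n le i).-1 F (brk x (hgt n le i)).
Proof. by move=> indep Fx forest rec; exact: linext_sum_hook. Qed.
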